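(* Algorithm 1, when run on an $n$-dimensional unique sink orientation $\psi$ with starting vertex $v^0 \in Q^n$, needs at most $O(\alpha^\rho)$ vertex evaluations, where $\rho = |r_\psi(v^0)|$ and $1<\alpha < \phi$ is the constant in the running time bound of the Fibonacci Seesaw algorithm ($\phi$ the golden ratio).
   Context: Let $Q^n = 2^{[n]}$ be the vertex set of the $n$-cube, with $u,v$ adjacent iff $|u\oplus v|=1$; faces are $F_{J,v}=\{u : v\oplus u\subseteq J\}$ for $J\subseteq[n]$, of dimension $|J|$. A unique sink orientation (USO) is an orientation of the cube's edges such that every nonempty face has a unique sink (vertex with no outgoing edges within the face). The outmap $s_\psi(v)$ is the set of coordinates $j$ such that the edge $\{v,v\oplus\{j\}\}$ is directed away from $v$. The reachmap is $r_\psi(v)=s_\psi(v)\cup\{j : \exists u \text{ reachable from } v \text{ by a directed path with } j\in s_\psi(u)\}$. A vertex evaluation is an oracle query returning $s_\psi(v)$ for a given $v$. The Fibonacci Seesaw algorithm (Szabó and Welzl) finds the sink of any $k$-dimensional USO (in particular of any $k$-face of $\psi$) using $O(\alpha^k)$ vertex evaluations, for a constant $1<\alpha<\phi=(1+\sqrt5)/2$. Algorithm 1: given a starting vertex $v^0$, set $E^0=\emptyset$ and $j=0$; while $s_\psi(v^j)\neq\emptyset$: pick any $b\in s_\psi(v^j)$, let $v^{j+1}$ be the sink of the face $F_{E^j, v^j\oplus\{b\}}$ computed by the Fibonacci Seesaw algorithm, set $E^{j+1}=E^j\cup\{b\}$ and $j\leftarrow j+1$; it stops when $s_\psi(v^j)=\emptyset$.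 *)

From mathcomp Require Import all_boot.
From Stdlib Require Import Reals.

Set Implicit Arguments.
Unset Strict Implicit.
Unset Printing Implicit Defensive.

(* Vertices of Q^n are subsets of [n] = 'I_n. *)
Notation vertex n := {set 'I_n}.

Definition symdiff (n : nat) (u v : vertex n) : vertex n := (u :\: v) :|: (v :\: u).

(* An orientation of the cube's edges, represented by its outmap s:
   j \in s v  iff the edge {v, v (+) {j}} is directed away from v.
   Consistency: every edge has exactly one direction. *)
Definition is_orientation (n : nat) (s : vertex n -> vertex n) : Prop :=
  forall (v : vertex n) (j : 'I_n), (j \in s v) = (j \notin s (symdiff v [set j])).

Definition in_face (n : nat) (J v u : vertex n) : bool := symdiff v u \subset J.

(* u is a sink of the face F_{J,v}: u lies in it and has no outgoing edge inside it
   (the edges of the face at u are exactly those in the coordinates of J). *)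
Definition is_face_sink (n : nat) (s : vertex n -> vertex n) (J v u : vertex n) : bool :=
  in_face J v u && (s u :&: J == set0).

Definition is_uso (n : nat) (s : vertex n -> vertex n) : Prop :=
  is_orientation s /\
  forall J v : vertex n, #|[set u | is_face_sink s J v u]| = 1%N.

Definition dedge (n : nat) (s : vertex n -> vertex n) : rel (vertex n) :=
  fun u w => [exists j : 'I_n, (j \in s u) && (w == symdiff u [set j])].

Definition reachmap (n : nat) (s : vertex n -> vertex n) (v : vertex n) : vertex n :=
  s v :|: [set j | [exists u, connect (dedge s) v u && (j \in s u)]].

(* Oracle (query) programs: the only access to the orientation is a vertex
   evaluation, i.e. asking for s(v) for a vertex v. *)
Inductive oprog (n : nat) (A : Type) : Type :=
| ORet : A -> oprog n A
| OAsk : vertex n -> (vertex n -> oprog n A) -> oprog n A.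

Fixpoint orun (n : nat) (A : Type) (s : vertex n -> vertex n) (p : oprog n A) : A * nat :=
  match p with
  | ORet a => (a, 0%N)
  | OAsk v k => let r := orun s (k (s v)) in (r.1, r.2.+1)
  end.

(* A face-sink-finding subroutine (in the theorem: the Fibonacci Seesaw algorithm),
   given for each dimension n and face (J, v) as an oracle program. *)
Definition sink_finder_type := forall n : nat, vertex n -> vertex n -> oprog n (vertex n).

Definition sink_finder_spec (c alpha : R) (FS : sink_finder_type) : Prop :=
  forall (n : nat) (s : vertex n -> vertex n), is_uso s ->
  forall J v : vertex n,
    is_face_sink s J v (orun s (FS n J v)).1 /\
    (INR (orun s (FS n J v)).2 <= c * alpha ^ #|J|)%R.

(* A (possibly partial) run of Algorithm 1 performing m iterations from v0:
   vs j = v^j, Es j = E^j, Bs j = {b_j} with b_j an arbitrary element of s(v^j)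
   (the algorithm may pick any b; all choices are covered). *)
Definition alg1_run (n : nat) (s : vertex n -> vertex n) (FS : sink_finder_type)
    (v0 : vertex n) (m : nat) (vs Es Bs : nat -> vertex n) : Prop :=
  vs 0%N = v0 /\ Es 0%N = set0 /\
  forall j : nat, (j < m)%N ->
    [/\ s (vs j) != set0,
        exists2 b : 'I_n, b \in s (vs j) & Bs j = [set b],
        vs j.+1 = (orun s (FS n (Es j) (symdiff (vs j) (Bs j)))).1
      & Es j.+1 = Es j :|: Bs j].

(* Vertex evaluations used by the first m iterations: one evaluation of s(v^j)
   for each j <= m (loop tests) plus the evaluations of each subroutine call. *)
Definition alg1_cost (n : nat) (s : vertex n -> vertex n) (FS : sink_finder_type)
    (m : nat) (vs Es Bs : nat -> vertex n) : nat :=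
  (m.+1 + \sum_(j < m) (orun s (FS n (Es j) (symdiff (vs j) (Bs j)))).2)%N.

Definition golden_ratio : R := ((1 + sqrt 5) / 2)%R.

(** Invariant of Algorithm 1: [v^j] is the sink of the face [F_{E^j, v^j}] and
    [|E^j| = j].  The sink of a face is reachable from every vertex of the face
    (descend one coordinate at a time), so every [v^j] is reachable from [v^0]
    and each chosen [b_j] lies in [r(v^0)]; hence [E^m] is a subset of [r(v^0)]
    and [m <= rho].  Iteration [j] calls the subroutine on a [j]-face, at cost
    [O(alpha^j)], and the geometric sum of these costs is [O(alpha^rho)]. *)

From mathcomp Require Import all_boot.
From Stdlib Require Import Reals Lra.

Set Implicit Arguments.
Unset Strict Implicit.
Unset Printing Implicit Defensive.

Section Faces.
Variable n : nat.
Implicit Types (u v w J K : vertex n).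

Lemma in_symdiff u v i : (i \in symdiff u v) = ((i \in u) != (i \in v)).
Proof. by rewrite !inE; case: (i \in u); case: (i \in v). Qed.

Lemma in_faceP J v u :
  reflect (forall i, i \notin J -> (i \in v) = (i \in u)) (in_face J v u).
Proof.
apply: (iffP subsetP) => H i.
- by move=> iNJ; apply/eqP; apply: contraNT iNJ => ne; apply: H; rewrite in_symdiff.
- by rewrite in_symdiff => iS; apply: contraNT iS => iNJ; rewrite H.
Qed.

Lemma in_face_refl J v : in_face J v v.
Proof. exact/in_faceP. Qed.

Lemma in_face_sym J v u : in_face J v u -> in_face J u v.
Proof. by move=> /in_faceP H; apply/in_faceP => i iNJ; rewrite H. Qed.

Lemma in_face_trans J v u w : in_face J v u -> in_face J u w -> in_face J v w.
Proof.
by move=> /in_faceP H1 /in_faceP H2; apply/in_faceP => i iNJ; rewrite H1 // H2.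
Qed.

Lemma in_face_flip J v b : b \in J -> in_face J v (symdiff v [set b]).
Proof.
move=> bJ; apply/in_faceP => i iNJ; rewrite in_symdiff in_set1.
have /negPf -> : i != b by apply: contraNneq iNJ => ->.
by case: (i \in v).
Qed.

Lemma in_faceU1_same b J v w :
  in_face (b |: J) v w -> (b \in v) = (b \in w) -> in_face J v w.
Proof.
move=> /in_faceP H Hb; apply/in_faceP => i iNJ.
by case: (eqVneq i b) => [-> //|ne]; apply: H; rewrite !inE negb_or ne.
Qed.

Lemma in_faceU1_flip b J v w :
  in_face (b |: J) v w -> (b \in v) != (b \in w) ->
  in_face J (symdiff v [set b]) w.
Proof.
move=> /in_faceP H Hb; apply/in_faceP => i iNJ; rewrite in_symdiff in_set1.
case: (eqVneq i b) => [->|ne]; first by move: Hb; case: (b \in v); case: (b \in w).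
by rewrite eqbF_neg negbK; apply: H; rewrite !inE negb_or ne.
Qed.

End Faces.

Section UniqueSink.
Variables (n : nat) (s : vertex n -> vertex n).
Hypothesis s_uso : is_uso s.
Implicit Types (u v w J K : vertex n).

Lemma face_sink_uniq J v u1 u2 :
  is_face_sink s J v u1 -> is_face_sink s J v u2 -> u1 = u2.
Proof.
case: s_uso => _ /(_ J v) /eqP /cards1P [x Hx] H1 H2.
have : u1 \in [set u | is_face_sink s J v u] by rewrite inE.
have : u2 \in [set u | is_face_sink s J v u] by rewrite inE.
by rewrite Hx !inE => /eqP -> /eqP ->.
Qed.

Lemma face_sink_exists J v : exists u, is_face_sink s J v u.
Proof.
case: s_uso => _ /(_ J v) /eqP /cards1P [x Hx]; exists x.
have : x \in [set u | is_face_sink s J v u] by rewrite Hx set11.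
by rewrite inE.
Qed.

Lemma face_sink_self J v : s v :&: J == set0 -> is_face_sink s J v v.
Proof. by rewrite /is_face_sink in_face_refl. Qed.

Lemma face_sink_move J v v' u :
  is_face_sink s J v u -> in_face J v v' -> is_face_sink s J v' u.
Proof.
case/andP => Hf Hs Hv; rewrite /is_face_sink Hs andbT.
exact: in_face_trans (in_face_sym Hv) Hf.
Qed.

Lemma face_sink_subface J K v u :
  is_face_sink s J v u -> K \subset J -> in_face K v u -> is_face_sink s K v u.
Proof.
case/andP => _ Hs sKJ Hf; rewrite /is_face_sink Hf -subset0 -(eqP Hs).
exact: setIS.
Qed.

Lemma face_sink_notin_out J v w b :
  is_face_sink s J v w -> b \in J -> b \notin s w.
Proof.
case/andP => _ /eqP Hs bJ; apply: contraFN (in_set0 b) => bs.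
by rewrite -Hs inE bs.
Qed.

Lemma face_sink_setU1 J v b w :
  s v :&: J == set0 -> b \in s v ->
  is_face_sink s J (symdiff v [set b]) w -> is_face_sink s (b |: J) v w.
Proof.
move=> vJ bv Hw.
have [u Hu] := face_sink_exists (b |: J) v.
have Hf : in_face (b |: J) v u by case/andP: Hu.
have sJbJ : J \subset b |: J by exact: subsetUr.
(* [u] cannot lie on the [b]-side of [v]: it would then be the [J]-face sink [v],
   whose [b]-edge is outgoing. *)
have [/eqP same|flip] := boolP ((b \in v) == (b \in u)).
  have Hu' := face_sink_subface Hu sJbJ (in_faceU1_same Hf same).
  rewrite (face_sink_uniq Hu' (face_sink_self vJ)) in Hu.
  by rewrite (negPf (face_sink_notin_out Hu (setU11 b J))) in bv.
have Hu' : is_face_sink s J (symdiff v [set b]) u.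
  apply: face_sink_subface sJbJ (in_faceU1_flip Hf flip).
  exact: face_sink_move Hu (in_face_flip v (setU11 b J)).
by rewrite (face_sink_uniq Hw Hu').
Qed.

Lemma face_sink_reachable J u w :
  is_face_sink s J u w -> connect (dedge s) u w.
Proof.
move: {2}#|J| (erefl #|J|) => k; elim: k J u w => [|k IH] J u w cardJ Hw.
  move/eqP: cardJ; rewrite cards_eq0 => /eqP J0.
  case/andP: Hw => /in_faceP Hf _.
  by have -> : u = w by apply/setP => i; apply: Hf; rewrite J0 inE.
have [b bJ] : exists b, b \in J by apply/card_gt0P; rewrite cardJ.
set J' := J :\ b.
have cardJ' : #|J'| = k by move: cardJ; rewrite (cardsD1 b J) bJ => -[].
have defJ : J = b |: J' by rewrite setD1K.
have [u' Hu'] := face_sink_exists J' u.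
apply: connect_trans (IH _ _ _ cardJ' Hu') _.
have u'J' : s u' :&: J' == set0 by case/andP: Hu'.
have Hfu' : in_face J u u'.
  by case/andP: Hu' => Hf _; apply: subset_trans Hf _; exact: subD1set.
have [bu'|bNu'] := boolP (b \in s u'); last first.
  suff Hu'J : is_face_sink s J u u' by rewrite (face_sink_uniq Hw Hu'J).
  rewrite /is_face_sink Hfu' -subset0 defJ; apply/subsetP => i.
  rewrite !inE => /andP [iu' /orP [/eqP ib|iJ']]; first by rewrite -ib iu' in bNu'.
  by move/eqP/setP/(_ i): u'J'; rewrite !inE iu' iJ'.
set x := symdiff u' [set b].
have [x' Hx'] := face_sink_exists J' x.
have Hx'J : is_face_sink s J u x'.
  rewrite defJ; apply: face_sink_move (face_sink_setU1 u'J' bu' Hx') _.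
  by rewrite -defJ in_face_sym.
rewrite (face_sink_uniq Hw Hx'J); apply: connect_trans (IH _ _ _ cardJ' Hx').
by apply: connect1; apply/existsP; exists b; rewrite bu' eqxx.
Qed.

Lemma out_sub_reachmap v u : connect (dedge s) v u -> s u \subset reachmap s v.
Proof.
move=> vu; apply/subsetP => j ju; rewrite inE; apply/orP; right.
by rewrite inE; apply/existsP; exists u; rewrite vu ju.
Qed.

End UniqueSink.

Lemma sum_le_geometric (alpha K : R) (f : nat -> nat) (k : nat) :
  (1 < alpha)%R -> (forall j, j < k -> (INR (f j) <= K * alpha ^ j)%R) ->
  (INR (\sum_(j < k) f j) * (alpha - 1) <= K * (alpha ^ k - 1))%R.
Proof.
move=> alpha_gt1; elim: k => [|k IH] fK; first by rewrite big_ord0 /=; lra.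
rewrite big_ord_recr plus_INR /=.
have := IH (fun j jk => fK j (ltnW jk)); have := fK k (ltnSn k).
set fk := INR _; set sum := INR _; set P := (alpha ^ k)%R.
have : (0 < alpha - 1)%R by lra.
nra.
Qed.

Section Algorithm1.
Variables (alpha c : R) (FS : sink_finder_type).
Hypothesis FS_spec : sink_finder_spec c alpha FS.
Variables (n : nat) (s : vertex n -> vertex n).
Hypothesis s_uso : is_uso s.
Variables (v0 : vertex n) (m : nat) (vs Es Bs : nat -> vertex n).
Hypothesis run : alg1_run s FS v0 m vs Es Bs.

Let call (j : nat) := orun s (FS (Es j) (symdiff (vs j) (Bs j))).

Lemma alg1_invariant j : j <= m ->
  [/\ s (vs j) :&: Es j == set0, #|Es j| = j,
      Es j \subset reachmap s v0 & connect (dedge s) v0 (vs j)].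
Proof.
case: run => vs0 [Es0 step]; elim: j => [|j IH] jm.
  by rewrite vs0 Es0 setI0 cards0 sub0set connect0.
have [_ [b bv defB] defv defE] := step j jm.
have [vE cardE ER v0v] := IH (ltnW jm).
have [sink _] := FS_spec s_uso (Es j) (symdiff (vs j) (Bs j)).
rewrite -defv defB in sink.
have bNE : b \notin Es j.
  by apply: contraTN vE => bE; apply/set0Pn; exists b; rewrite inE bv.
have vv' : connect (dedge s) (vs j) (vs j.+1).
  apply: connect_trans (face_sink_reachable s_uso sink).
  by apply: connect1; apply/existsP; exists b; rewrite bv eqxx.
rewrite defE defB setUC; split.
- by case/andP: (face_sink_setU1 s_uso vE bv sink).
- by rewrite cardsU1 bNE cardE.
- rewrite subUset ER andbT sub1set.
  exact: subsetP (out_sub_reachmap v0v) b bv.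
- exact: connect_trans v0v vv'.
Qed.

Lemma alg1_iterations_le_reachmap : m <= #|reachmap s v0|.
Proof.
have [_ cardE ER _] := alg1_invariant (leqnn m).
by rewrite -{1}cardE subset_leq_card.
Qed.

Lemma alg1_call_cost_le j : j < m -> (INR (call j).2 <= c * alpha ^ j)%R.
Proof.
move=> jm; have [_ cardE _ _] := alg1_invariant (ltnW jm).
have [_ cost] := FS_spec s_uso (Es j) (symdiff (vs j) (Bs j)).
by rewrite cardE in cost.
Qed.

Hypothesis alpha_gt1 : (1 < alpha)%R.

Lemma alg1_cost_le :
  (INR (alg1_cost s FS m vs Es Bs) * (alpha - 1) <= (alpha + Rabs c) * alpha ^ m)%R.
Proof.
have alpha_pow_ge1 j : (1 <= alpha ^ j)%R by apply: pow_R1_Rle; lra.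
have ones : (INR m.+1 * (alpha - 1) <= alpha * alpha ^ m - 1)%R.
  have := sum_le_geometric (f := fun=> 1%N) (K := 1%R) (k := m.+1) alpha_gt1.
  by rewrite sum1_card card_ord Rmult_1_l; apply=> j _; rewrite Rmult_1_l.
have := sum_le_geometric (k := m) alpha_gt1 alg1_call_cost_le.
rewrite /alg1_cost plus_INR /call; cbv beta; set calls := INR _.
have := Rle_abs c; have := Rabs_pos c; have := alpha_pow_ge1 m; nra.
Qed.

End Algorithm1.

Theorem theorem19 (alpha c : R) (FS : sink_finder_type)
  (Halpha : (1 < alpha < golden_ratio)%R)
  (HFS : sink_finder_spec c alpha FS) :
  exists C : R,
    forall (n : nat) (s : {set 'I_n} -> {set 'I_n}), is_uso s ->
    forall (v0 : {set 'I_n}) (m : nat) (vs Es Bs : nat -> {set 'I_n}),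
      alg1_run s FS v0 m vs Es Bs ->
      (INR (alg1_cost s FS m vs Es Bs) <= C * alpha ^ #|reachmap s v0|)%R.
Proof.
have [alpha_gt1 _] := Halpha.
exists ((alpha + Rabs c) / (alpha - 1))%R => n s s_uso v0 m vs Es Bs run.
have cost := alg1_cost_le HFS s_uso run alpha_gt1.
have m_le_rho := alg1_iterations_le_reachmap HFS s_uso run.
have pow_le := Rle_pow alpha _ _ (Rlt_le _ _ alpha_gt1) (leP m_le_rho).
apply: (Rmult_le_reg_r (alpha - 1)); first lra.
have -> : ((alpha + Rabs c) / (alpha - 1) * alpha ^ #|reachmap s v0| * (alpha - 1)
          = (alpha + Rabs c) * alpha ^ #|reachmap s v0|)%R by field; lra.
have := Rabs_pos c; nra.
Qed.
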